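(* Let $a_1,\ldots,a_n$ be relatively prime positive integers, $\mathcal{S}=\langle a_1,\ldots,a_n\rangle$, and let $e$ be a positive integer with $\gcd(e,a_1)=1$; put $\mathcal{S}^e=\langle a_1,ea_2,\ldots,ea_n\rangle$. Then $\Delta(\mathcal{S}^e)=e\,\Delta(\mathcal{S})$. Consequently, if $\mathcal{S}^e$ is pseudo-symmetric then $e=1$.
   Context: For a numerical semigroup $\mathcal{S}$ (a submonoid of $\mathbb{Z}_{\ge 0}$ with finite complement), the Frobenius number $g(\mathcal{S})$ is the largest integer not in $\mathcal{S}$, the genus $N(\mathcal{S})$ is the number of non-negative integers not in $\mathcal{S}$, and $\Delta(\mathcal{S})=2N(\mathcal{S})-1-g(\mathcal{S})$. $\mathcal{S}$ is pseudo-symmetric if $g(\mathcal{S})$ is even and $\mathcal{S}\cup(g(\mathcal{S})-\mathcal{S})=\mathbb{Z}\setminus\{g(\mathcal{S})/2\}$, where $g-\mathcal{S}=\{g-s: s\in\mathcal{S}\}$; it is known that this is equivalent to $\Delta(\mathcal{S})=1$. $\langle b_1,\ldots,b_t\rangle$ denotes the set of non-negative integer linear combinations of $b_1,\ldots,b_t$. *)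

From mathcomp Require Import all_boot all_order all_algebra.
Set Implicit Arguments. Unset Strict Implicit. Unset Printing Implicit Defensive.
Import Order.TTheory GRing.Theory Num.Theory.

(* inS gens x : x is a non-negative integer linear combination of the
   generators in gens, i.e. x \in < gens >.  (The coefficient k of the head
   generator g ranges over 0..x, which is no restriction when g > 0, and
   also covers g = 0.) *)
Fixpoint inS (gens : seq nat) (x : nat) : bool :=
  match gens with
  | [::] => x == 0
  | g :: gs => [exists k : 'I_x.+1, (k * g <= x) && inS gs (x - k * g)]
  end.

Definition inSZ (gens : seq nat) (z : int) : bool :=
  (0 <= z)%R && inS gens `|z|%N.

(* g is the Frobenius number of < gens >: the largest integer not in it
   (equal to -1 when every integer >= 0 belongs to it). *)
Definition is_frobenius (gens : seq nat) (g : int) : Prop :=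
  (-1 <= g)%R /\ ~~ inSZ gens g /\ (forall x : nat, (g < x%:Z)%R -> inS gens x).

Definition is_genus (gens : seq nat) (N : nat) : Prop :=
  exists B : nat, (forall x : nat, B <= x -> inS gens x) /\
                  N = count (fun x => ~~ inS gens x) (iota 0 B).

Definition Delta (g : int) (N : nat) : int := (2 * N%:Z - 1 - g)%R.

Definition pseudo_symmetric (gens : seq nat) : Prop :=
  exists h : int, is_frobenius gens (2 * h)%R /\
    forall z : int,
      (inSZ gens z \/ exists s : int, inSZ gens s /\ z = (2 * h - s)%R) <-> z <> h.

Definition Se (e a1 : nat) (as_ : seq nat) : seq nat := a1 :: map (fun a => e * a) as_.

From mathcomp Require Import all_boot all_order all_algebra zify.
Set Implicit Arguments. Unset Strict Implicit. Unset Printing Implicit Defensive.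
Import Order.TTheory GRing.Theory Num.Theory.

(* Since gcd(e, a1) = 1, the residues of a1 r modulo e (0 <= r < e) run over all classes
   modulo e, and a number a1 r + e q with 0 <= r < e lies in S^e iff q >= 0 and q lies in S.
   Hence g(S^e) = e g(S) + a1 (e - 1), and counting the gaps of S^e class by class gives
   N(S^e) = e N(S) + sum_(r < e) floor(a1 r / e) = e N(S) + (a1 - 1)(e - 1)/2, so that
   Delta(S^e) = e Delta(S). A pseudo-symmetric semigroup has Delta = 1, which forces e = 1. *)

Lemma inS_consP g gs x :
  reflect (exists k y, x = k * g + y /\ inS gs y) (inS (g :: gs) x).
Proof.
apply: (iffP existsP) => [[k /andP[le_kg_x hy]]|[k [y [-> hy]]]].
  by exists k, (x - k * g); rewrite subnKC.
have [g0|g_gt0] := posnP g.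
  by exists ord0; rewrite g0 !muln0 add0n subn0 leq0n; exact: hy.
have lt_k : k < (k * g + y).+1 by rewrite ltnS (leq_trans (leq_pmulr k g_gt0)) ?leq_addr.
by exists (Ordinal lt_k); rewrite leq_addr addKn; exact: hy.
Qed.

Lemma inS_add gs x y : inS gs x -> inS gs y -> inS gs (x + y).
Proof.
elim: gs x y => [x y /eqP-> /eqP-> //|g gs IH x y].
move=> /inS_consP[k [x' [-> hx']]] /inS_consP[l [y' [-> hy']]].
apply/inS_consP; exists (k + l), (x' + y'); split; last exact: IH.
by rewrite mulnDl addnACA.
Qed.

Lemma inS_scaleP e gs x : 0 < e ->
  reflect (exists2 y, x = e * y & inS gs y) (inS (map (fun a => e * a) gs) x).
Proof.
move=> e_gt0; elim: gs x => [|g gs IH] x.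
  by apply: (iffP eqP) => [->|[y -> /eqP->]]; [exists 0; rewrite ?muln0|rewrite muln0].
apply: (iffP (inS_consP _ _ _)) => [[k [z [-> /IH[y -> hy]]]]|[y -> /inS_consP[k [z [-> hz]]]]].
  by exists (k * g + y); [rewrite mulnDr mulnCA|apply/inS_consP; exists k, y].
exists k, (e * z); split; first by rewrite mulnDr mulnCA.
by apply/IH; exists z.
Qed.

Lemma inS_SeP e a1 as_ x : 0 < e ->
  reflect (exists k y, x = k * a1 + e * y /\ inS as_ y) (inS (Se e a1 as_) x).
Proof.
move=> e_gt0; apply: (iffP (inS_consP _ _ _)).
  by case=> k [z [-> /(inS_scaleP _ _ e_gt0)[y -> hy]]]; exists k, y.
case=> k [y [-> hy]]; exists k, (e * y); split=> //.
by apply/inS_scaleP => //; exists y.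
Qed.

Lemma inSZ_nat gens (x : nat) : inSZ gens x%:Z = inS gens x.
Proof. by []. Qed.

Lemma inSZ_neg gens (z : int) : (z < 0)%R -> inSZ gens z = false.
Proof. by rewrite /inSZ ltNge => /negbTE->. Qed.

Lemma leq_eqmod d m n : m = n %[mod d] -> m < n + d -> m <= n.
Proof.
have [->|d_gt0] := posnP d; first by rewrite !modn0 => ->.
move=> eq_mn lt_mn; have dm := divn_eq m d; have dn := divn_eq n d.
have : m %/ d <= n %/ d by rewrite -ltnS -(ltn_pmul2r d_gt0); lia.
rewrite -(leq_pmul2r d_gt0); lia.
Qed.

Lemma eqmodDMr d m n p q : m + d * p = n + d * q -> m = n %[mod d].
Proof. by move/(congr1 (modn^~ d)); rewrite /= !(addnC _ (d * _)) !(mulnC d) !modnMDl. Qed.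

Lemma double_sum_ord n : 2 * \sum_(i < n) i = n * n.-1.
Proof.
elim: n => [|n IH]; first by rewrite big_ord0.
by rewrite big_ord_recr /= mulnDr IH; case: n {IH} => //= n; nia.
Qed.

Section CoprimeResidues.
Variables (e a : nat).
Hypotheses (e_gt0 : 0 < e) (co_ea : coprime e a).

Lemma eqn_mod_coprime_mul2l m n : (a * m == a * n %[mod e]) = (m == n %[mod e]).
Proof.
wlog le_nm : m n / n <= m.
  by move=> W; case: (leqP n m) => [/W//|/ltnW/W]; rewrite eq_sym [in RHS]eq_sym.
by rewrite !eqn_mod_dvd ?leq_mul2l ?le_nm ?orbT // -mulnBr Gauss_dvdr.
Qed.

Definition mulmod (i : 'I_e) : 'I_e := Ordinal (ltn_pmod (a * i) e_gt0).

Lemma mulmod_inj : injective mulmod.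
Proof.
move=> i j /(congr1 val)/eqP /=.
by rewrite eqn_mod_coprime_mul2l !modn_small // => /eqP/val_inj.
Qed.

Lemma mulmod_onto x : exists2 r, r < e & a * r = x %[mod e].
Proof.
have /codomP[i /(congr1 val) /= eq_x] := injF_onto mulmod_inj (Ordinal (ltn_pmod x e_gt0)).
by exists i; rewrite // eq_x.
Qed.

Lemma double_sum_div_coprime : 2 * \sum_(r < e) (a * r) %/ e = (a - 1) * (e - 1).
Proof.
have sum_mod : \sum_(r < e) (a * r) %% e = \sum_(r < e) r.
  by rewrite [RHS](reindex_inj mulmod_inj).
have sum_divmod : (\sum_(r < e) (a * r) %/ e) * e + \sum_(r < e) r = a * \sum_(r < e) r.
  rewrite -{1}sum_mod big_distrl big_distrr -big_split /=.
  by apply: eq_bigr => r _; rewrite -divn_eq.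
have := double_sum_ord e.
set Q := \sum_(r < e) _ %/ _ in sum_divmod *; set T := \sum_(r < e) (r : nat) in sum_divmod *.
move=> T2; apply/eqP; rewrite -(eqn_pmul2l e_gt0); apply/eqP; nia.
Qed.

End CoprimeResidues.

Lemma count_iotaSr (P : pred nat) m n :
  count P (iota m n.+1) = count P (iota m n) + P (m + n).
Proof. by rewrite -addn1 iotaD count_cat /= addn0. Qed.

Lemma count_iota_sum (P : pred nat) m n : count P (iota m n) = \sum_(i < n) P (m + i).
Proof.
elim: n => [|n IH]; first by rewrite big_ord0.
by rewrite count_iotaSr big_ord_recr IH.
Qed.

Lemma count_iota_mul (P : pred nat) d M :
  count P (iota 0 (d * M)) = \sum_(c < d) count (fun j => P (d * j + c)) (iota 0 M).
Proof.
elim: M => [|M IH]; first by rewrite muln0 big1.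
rewrite mulnS addnC iotaD count_cat IH add0n count_iota_sum -big_split.
by apply: eq_bigr => c _; rewrite count_iotaSr.
Qed.

Lemma count_iota_stable (P : pred nat) B B' :
  (forall x, B <= x -> P x) -> B <= B' ->
  count (fun x => ~~ P x) (iota 0 B') = count (fun x => ~~ P x) (iota 0 B).
Proof.
move=> PB le_BB'; rewrite -(subnKC le_BB') iotaD count_cat add0n.
rewrite [X in _ + X](@eq_in_count _ _ pred0) ?count_pred0 ?addn0 // => x.
by rewrite mem_iota => /andP[le_Bx _] /=; rewrite PB.
Qed.

Lemma count_iota_reflect (P : pred nat) n :
  count (fun x => P (n - x)) (iota 0 n.+1) = count P (iota 0 n.+1).
Proof.
rewrite !count_iota_sum (reindex_inj rev_ord_inj); apply: eq_bigr => i _.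
by rewrite /= !add0n subSS subKn // -ltnS.
Qed.

Lemma is_genus_count gens N B :
  is_genus gens N -> (forall x, B <= x -> inS gens x) ->
  N = count (fun x => ~~ inS gens x) (iota 0 B).
Proof.
move=> [B' [condB' ->]] condB.
by rewrite -(count_iota_stable condB' (leq_maxl B' B)) (count_iota_stable condB (leq_maxr B' B)).
Qed.

Lemma is_genus_unique gens N N' : is_genus gens N -> is_genus gens N' -> N = N'.
Proof. by move=> genN [B [condB ->]]; apply: is_genus_count. Qed.

Lemma frobenius_lt_conductor gens g B :
  is_frobenius gens g -> (forall x, B <= x -> inS gens x) -> (g < B%:Z)%R.
Proof.
case: g => [n|n] [_ [gap_g _]] condB; last by rewrite NegzE; lia.
by rewrite ltz_nat ltnNge; apply: contra gap_g => /condB.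
Qed.

Lemma frobenius_unique gens g g' : is_frobenius gens g -> is_frobenius gens g' -> g = g'.
Proof.
suff le_g : forall h h', is_frobenius gens h -> is_frobenius gens h' -> (h <= h')%R.
  by move=> fg fg'; apply/eqP; rewrite eq_le !le_g.
move=> h h' [_ [gap_h _]] [h'_ge [_ cond_h']]; rewrite leNgt; apply/negP => lt_h'h.
case: h gap_h lt_h'h => [n|n] gap_h lt_h'h; last by move: lt_h'h h'_ge; rewrite NegzE; lia.
by move: gap_h; rewrite inSZ_nat cond_h'.
Qed.

Lemma frobenius_exists gens B : (forall x, B <= x -> inS gens x) -> exists g, is_frobenius gens g.
Proof.
elim: B => [|B IH] condB.
  by exists (-1)%R; split; [|split; [rewrite inSZ_neg|move=> x _; apply: condB]].
have [inB|gapB] := boolP (inS gens B).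
  by apply: IH => x; rewrite leq_eqVlt => /predU1P[<-|/condB].
exists (Posz B); split; first by [].
by split=> // x; rewrite ltz_nat; apply: condB.
Qed.

Lemma pseudo_symmetric_genus gens n :
  is_frobenius gens (2 * n%:Z)%R ->
  (forall z : int,
      (inSZ gens z \/ exists s : int, inSZ gens s /\ z = (2 * n%:Z - s)%R) <-> z <> Posz n) ->
  count (fun x => ~~ inS gens x) (iota 0 (2 * n).+1) = n.+1.
Proof.
move=> [_ [gap_2n _]] symm.
have {}gap_2n : ~~ inS gens (2 * n).
  by move: gap_2n; rewrite (_ : (2 * n%:Z)%R = Posz (2 * n)) //; lia.
have gap_n : ~~ inS gens n by apply/negP => in_n; apply: (proj1 (symm n)) => //; left.
(* For x <= 2n, x and 2n - x are never both in S, their sum being the gap 2n; by symmetry one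
   of them is in S unless x = n. *)
set P := fun x => ~~ inS gens x; set Q := fun x => P (2 * n - x).
have countQ : count Q (iota 0 (2 * n).+1) = count P (iota 0 (2 * n).+1).
  exact: count_iota_reflect.
have countPUQ : count (predU P Q) (iota 0 (2 * n).+1) = (2 * n).+1.
  rewrite -[RHS](size_iota 0) -count_predT; apply: eq_in_count => x.
  rewrite mem_iota /= /Q /P -negb_and => lt_x; apply/negP => /andP[in_x in_2nx].
  by move: (inS_add in_x in_2nx); rewrite subnKC ?(negbTE gap_2n) //; lia.
have countPIQ : count (predI P Q) (iota 0 (2 * n).+1) = 1.
  rewrite (@eq_in_count _ _ (pred1 n)) => [|x].
    by rewrite count_uniq_mem ?iota_uniq // mem_iota; lia.
  rewrite mem_iota /= /Q /P => lt_x; have [->|ne_xn] := eqVneq x n.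
    by rewrite (_ : 2 * n - n = n) ?andbb //; lia.
  have /symm[in_x|[[m|m] [in_s def_x]]] : Posz x <> Posz n by case=> /eqP; rewrite (negbTE ne_xn).
  - by rewrite -inSZ_nat in_x.
  - by rewrite (_ : 2 * n - x = m) -?inSZ_nat ?in_s ?andbF //; lia.
  - by rewrite inSZ_neg in in_s.
by have := count_predUI P Q (iota 0 (2 * n).+1); rewrite countPUQ countPIQ countQ; lia.
Qed.

Lemma pseudo_symmetric_Delta gens :
  pseudo_symmetric gens -> exists g N, [/\ is_frobenius gens g, is_genus gens N & Delta g N = 1%R].
Proof.
move=> [[n|n] [frob symm]]; last by case: frob; rewrite NegzE; lia.
exists (2 * n%:Z)%R, (count (fun x => ~~ inS gens x) (iota 0 (2 * n).+1)); split=> //.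
  by exists (2 * n).+1; split=> // x le_x; case: frob => _ [_]; apply; lia.
by rewrite pseudo_symmetric_genus // /Delta; lia.
Qed.

Section Dilation.
Variables (a1 e : nat) (as_ : seq nat).
Hypotheses (a1_gt0 : 0 < a1) (e_gt0 : 0 < e) (co_ea1 : coprime e a1).

Local Notation S := (a1 :: as_).
Local Notation SE := (Se e a1 as_).

Lemma inS_Se_residue r q : r < e -> inS SE (a1 * r + e * q) = inS S q.
Proof.
move=> lt_re; apply/(inS_SeP _ _ _ e_gt0)/inS_consP.
  case=> k [y [eq_x hy]].
  have /eqP : a1 * r = a1 * k %[mod e] by apply: (eqmodDMr (p := q) (q := y)); lia.
  rewrite (eqn_mod_coprime_mul2l co_ea1) (modn_small lt_re) => /eqP eq_rk.
  have def_k := divn_eq k e; rewrite -eq_rk in def_k.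
  have /eqP : e * q = e * (k %/ e * a1 + y) by rewrite def_k in eq_x; nia.
  by rewrite eqn_pmul2l // => /eqP->; exists (k %/ e), y.
case=> k [y [-> hy]]; exists (r + e * k), y; split=> //; nia.
Qed.

Lemma notin_Se_below r q x : r < e -> 0 < q -> x + e * q = a1 * r -> ~~ inS SE x.
Proof.
move=> lt_re q_gt0 eq_x; apply/negP => /(inS_SeP _ _ _ e_gt0)[k [y [def_x _]]].
have /eqP : a1 * r = a1 * k %[mod e] by apply: (eqmodDMr (p := 0) (q := y + q)); nia.
rewrite (eqn_mod_coprime_mul2l co_ea1) (modn_small lt_re) => /eqP eq_rk.
have : a1 * r <= a1 * k by rewrite leq_mul2l eq_rk leq_mod orbT.
nia.
Qed.

Definition dilated_frobenius (g : int) : int := (e%:Z * g + (a1 * (e - 1))%:Z)%R.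

Lemma inS_Se_gt g x :
  is_frobenius S g -> (dilated_frobenius g < x%:Z)%R -> inS SE x.
Proof.
move=> [g_ge [_ gapsS]]; rewrite /dilated_frobenius => lt_x.
have le_eg : (- e%:Z <= e%:Z * g)%R by rewrite -mulrN1 ler_wpM2l.
have [r lt_re eq_r] := mulmod_onto e_gt0 co_ea1 x.
have le_ar : a1 * r <= a1 * (e - 1) by rewrite leq_mul2l; lia.
have le_rx : a1 * r <= x by apply: leq_eqmod eq_r _; lia.
have /dvdnP[q def_q] : e %| x - a1 * r by rewrite -eqn_mod_dvd // eq_r.
have def_x : x = a1 * r + e * q by rewrite (mulnC e) -def_q subnKC.
rewrite def_x inS_Se_residue //; apply: gapsS.
have : (e%:Z * g < e%:Z * q%:Z)%R by rewrite def_x in lt_x; lia.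
by rewrite ltr_pM2l // ltz_nat.
Qed.

Lemma frobenius_Se g : is_frobenius S g -> is_frobenius SE (dilated_frobenius g).
Proof.
move=> frob_g; have [g_ge [g_gap _]] := frob_g.
split; [|split; last by move=> x; apply: inS_Se_gt].
  have le_eg : (- e%:Z <= e%:Z * g)%R by rewrite -mulrN1 ler_wpM2l.
  have : e - 1 <= a1 * (e - 1) by rewrite leq_pmull.
  rewrite /dilated_frobenius; lia.
have lt_e1 : e - 1 < e by lia.
rewrite /dilated_frobenius; case: g g_ge g_gap {frob_g} => n g_ge g_gap.
  by rewrite -PoszM -PoszD inSZ_nat addnC inS_Se_residue.
have -> : n = 0 by move: g_ge; rewrite NegzE; lia.
have [lt_ae|le_ea] := ltnP (a1 * (e - 1)) e; first by rewrite inSZ_neg //; lia.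
have -> : (e%:Z * Negz 0 + (a1 * (e - 1))%:Z)%R = Posz (a1 * (e - 1) - e) by lia.
by rewrite inSZ_nat; apply: (@notin_Se_below (e - 1) 1); lia.
Qed.

(* In the class of a1 r modulo e, the (a1 r) / e members below a1 r are gaps of S^e, and
   a1 r + e q is a gap exactly when q is a gap of S. *)
Lemma count_Se_residue B r M :
  (forall y, B <= y -> inS S y) -> r < e -> B + a1 <= M ->
  count (fun j => ~~ inS SE (e * j + (a1 * r) %% e)) (iota 0 M)
  = count (fun y => ~~ inS S y) (iota 0 B) + (a1 * r) %/ e.
Proof.
move=> condB lt_re le_M.
set D := (a1 * r) %/ e; set c := (a1 * r) %% e.
have def_ar : a1 * r = D * e + c by rewrite /D /c -divn_eq.
have le_Da : D <= a1.
  by rewrite /D -ltnS ltn_divLR //; have := leq_mul (leqnn a1) (ltnW lt_re); nia.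
clearbody D c; rewrite -(subnKC (_ : D <= M)); last by lia.
rewrite iotaD count_cat add0n (@eq_in_count _ _ predT) => [|j]; last first.
  rewrite mem_iota add0n => /andP[_ lt_jD] /=.
  by apply: (@notin_Se_below r (D - j)); lia.
rewrite count_predT size_iota addnC; congr addn.
rewrite -{1}(addn0 D) iotaDl count_map (@eq_count _ _ (fun y => ~~ inS S y)) => [|k].
  by apply: count_iota_stable condB _; lia.
by rewrite inE (_ : e * (D + k) + c = a1 * r + e * k) ?inS_Se_residue //; lia.
Qed.

Lemma count_Se B M :
  (forall y, B <= y -> inS S y) -> B + a1 <= M ->
  count (fun x => ~~ inS SE x) (iota 0 (e * M))
  = e * count (fun y => ~~ inS S y) (iota 0 B) + \sum_(r < e) (a1 * r) %/ e.
Proof.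
move=> condB le_M; rewrite count_iota_mul (reindex_inj (@mulmod_inj _ _ e_gt0 co_ea1)) /=.
set N := count _ (iota 0 B).
rewrite (eq_bigr (fun r : 'I_e => N + (a1 * r) %/ e)) => [|r _]; last exact: count_Se_residue.
by rewrite big_split /= sum_nat_const card_ord.
Qed.

Lemma genus_Se g N : is_frobenius S g -> is_genus S N ->
  is_genus SE (e * N + \sum_(r < e) (a1 * r) %/ e).
Proof.
move=> frob_g [B [condB ->]]; have lt_gB := frobenius_lt_conductor frob_g condB.
exists (e * (B + a1)); split; last by rewrite (count_Se condB).
move=> x le_x; apply: (inS_Se_gt frob_g).
have : (e%:Z * g < e%:Z * B%:Z)%R by rewrite ltr_pM2l.
have : a1 * (e - 1) < e * a1 by nia.
rewrite /dilated_frobenius; lia.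
Qed.

Lemma Delta_dilated g N :
  Delta (dilated_frobenius g) (e * N + \sum_(r < e) (a1 * r) %/ e) = (e%:Z * Delta g N)%R.
Proof.
have := double_sum_div_coprime e_gt0 co_ea1; set Q := \sum_(r < e) _ => dQ.
rewrite /Delta /dilated_frobenius; nia.
Qed.

Lemma Delta_Se g ge N Ne :
  is_frobenius S g -> is_genus S N -> is_frobenius SE ge -> is_genus SE Ne ->
  Delta ge Ne = (e%:Z * Delta g N)%R.
Proof.
move=> frob_g gen_N frob_ge gen_Ne.
rewrite (frobenius_unique frob_ge (frobenius_Se frob_g)).
by rewrite (is_genus_unique gen_Ne (genus_Se frob_g gen_N)) Delta_dilated.
Qed.

Lemma pseudo_symmetric_Se : pseudo_symmetric SE -> e = 1.
Proof.
move=> /pseudo_symmetric_Delta[ge [Ne [frob_ge gen_Ne Delta1]]].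
have condS q : (absz ge).+1 <= q -> inS S q.
  move=> le_q; case: frob_ge => ge_ge [_ condSe].
  rewrite -(@inS_Se_residue 0 q) // muln0 add0n; apply: condSe.
  have : q <= e * q by rewrite leq_pmull.
  lia.
have [g frob_g] := frobenius_exists condS.
have gen_N : is_genus S (count (fun x => ~~ inS S x) (iota 0 (absz ge).+1)) by exists (absz ge).+1.
have := Delta_Se frob_g gen_N frob_ge gen_Ne.
rewrite Delta1 => /(congr1 absz); rewrite abszM /= => /esym/eqP.
by rewrite muln_eq1 => /andP[/eqP].
Qed.

End Dilation.

Theorem mainTheorem2 (a1 : nat) (as_ : seq nat) (e : nat)
  (hpos : all (fun a => 0 < a) (a1 :: as_))
  (hgcd : foldr gcdn 0 (a1 :: as_) = 1)
  (he : 0 < e) (hcop : coprime e a1) :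
  (forall (g ge : int) (N Ne : nat),
      is_frobenius (a1 :: as_) g -> is_genus (a1 :: as_) N ->
      is_frobenius (Se e a1 as_) ge -> is_genus (Se e a1 as_) Ne ->
      Delta ge Ne = (e%:Z * Delta g N)%R)
  /\ (pseudo_symmetric (Se e a1 as_) -> e = 1).
Proof.
have a1_gt0 : 0 < a1 by case/andP: hpos.
split=> [g ge N Ne|]; first exact: (Delta_Se a1_gt0 he hcop).
exact: (pseudo_symmetric_Se a1_gt0 he hcop).
Qed.
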